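(* Let $t,w,w',n,g$ be positive integers with $t\le w\le w'$. Suppose that there exists a $t$-resolvable Steiner system $\mathrm{S}(w,w',n)$. If there exists an $\mathrm{LGMHP}^*(t,w,w',g)$, then there exists an $\mathrm{LGMHP}^*(t,w,n,g)$.
   Context: A Steiner system $\mathrm{S}(s,k,n)$ is a pair $(X,\mathcal{B})$ with $|X|=n$ and $\mathcal{B}$ a family of $k$-subsets (blocks) of $X$ such that every $s$-subset of $X$ lies in exactly one block. An $\mathrm{S}(w,w',n)$ $(X,\mathcal{B})$ is $t$-resolvable if $\mathcal{B}$ can be partitioned into block sets of $\mathrm{S}(t,w',n)$'s on $X$. For a set $Y$ of size $m$, let $X=Y\times[g]$ with groups $\{y\}\times[g]$. An H-packing $\mathrm{HP}(m,g,w,t)$ is a family of $w$-subsets (blocks) of $X$, each meeting every group in at most one point, such that every $t$-subset of $X$ with points in $t$ distinct groups lies in at most one block. A block $\{(y_1,a_1),\dots,(y_w,a_w)\}$ is identified with the word indexed by $Y$ over $\{0\}\cup[g]$ with entry $a_s$ at coordinate $y_s$ and $0$ elsewhere. A $\mathrm{GMHP}^*(t,w,m,g)$ is an $\mathrm{HP}(m,g,w,t)$ in which any two distinct blocks have Hamming distance at least $2(w-t+1)$ and which has exactly $g^{t-1}\binom{m}{t}/\binom{w}{t}$ blocks. An $\mathrm{LGMHP}^*(t,w,m,g)$ is a partition of the set of all $w$-subsets of $Y\times[g]$ meeting each group in at most one point into block sets of $\mathrm{GMHP}^*(t,w,m,g)$'s. *)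

From mathcomp Require Import all_boot.
Set Implicit Arguments. Unset Strict Implicit. Unset Printing Implicit Defensive.

Definition steiner_system (s k n : nat) (B : {set {set 'I_n}}) : Prop :=
  (forall b, b \in B -> #|b| = k) /\
  (forall S : {set 'I_n}, #|S| = s -> #|[set b in B | S \subset b]| = 1).

Definition t_resolvable_steiner_exists (t w w' n : nat) : Prop :=
  exists B : {set {set 'I_n}}, @steiner_system w w' n B /\
    exists P : {set {set {set 'I_n}}},
      partition P B /\ forall C, C \in P -> @steiner_system t w' n C.

(* Points of X = Y x [g] with Y = 'I_m, [g] = 'I_g; the group of p is p.1. *)
Definition meets_groups_once (m g : nat) (b : {set 'I_m * 'I_g}) : bool :=
  [forall y : 'I_m, #|[set p in b | p.1 == y]| <= 1].

(* The word of a block: coordinate y carries a if (y,a) is in b, 0 (None) else. *)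
Definition word (m g : nat) (b : {set 'I_m * 'I_g}) (y : 'I_m) : option 'I_g :=
  [pick a | (y, a) \in b].

Definition hamming (m g : nat) (b1 b2 : {set 'I_m * 'I_g}) : nat :=
  #|[set y : 'I_m | word b1 y != word b2 y]|.

Definition HP (m g w t : nat) (B : {set {set 'I_m * 'I_g}}) : Prop :=
  (forall b, b \in B -> #|b| = w /\ meets_groups_once b) /\
  (forall T : {set 'I_m * 'I_g}, #|T| = t -> #|[set p.1 | p in T]| = t ->
      #|[set b in B | T \subset b]| <= 1).

(* GMHP*(t,w,m,g); the block count g^(t-1) C(m,t)/C(w,t) is stated
   multiplicatively (C(w,t) > 0 since t <= w). *)
Definition GMHP (t w m g : nat) (B : {set {set 'I_m * 'I_g}}) : Prop :=
  @HP m g w t B /\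
  (forall b1 b2, b1 \in B -> b2 \in B -> b1 != b2 ->
      2 * (w - t + 1) <= hamming b1 b2) /\
  #|B| * 'C(w, t) = g ^ (t - 1) * 'C(m, t).

Definition all_words (w m g : nat) : {set {set 'I_m * 'I_g}} :=
  [set b : {set 'I_m * 'I_g} | (#|b| == w) && meets_groups_once b].

Definition LGMHP_exists (t w m g : nat) : Prop :=
  exists P : {set {set {set 'I_m * 'I_g}}},
    partition P (all_words w m g) /\ forall B, B \in P -> @GMHP t w m g B.

(* Let B be the blocks of the S(w,w',n), resolved into S(t,w',n)'s C_i, and let
   Q_j be the classes of the LGMHP*(t,w,w',g). The support of a word y of weight w
   lies in exactly one block b of B; numbering the points of b by 0..w'-1 turns y
   into a word of length w', its local word. The sets
   K_ij = {y | the block of y is in C_i and its local word is in Q_j}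
   partition all words, and each K_ij is a GMHP*: two words with the same block
   inherit packing and distance from Q_j, while two words in distinct blocks of
   C_i have supports meeting in fewer than t points. Finally y |-> (block, local
   word) is a bijection K_ij -> C_i x Q_j, and |C_i| C(w',t) = C(n,t),
   |Q_j| C(w,t) = g^(t-1) C(w',t). *)

From mathcomp Require Import all_boot.
Set Implicit Arguments. Unset Strict Implicit. Unset Printing Implicit Defensive.

Definition supp (m g : nat) (y : {set 'I_m * 'I_g}) : {set 'I_m} := [set p.1 | p in y].

Section Words.
Variables m g : nat.
Implicit Types y : {set 'I_m * 'I_g}.

Lemma meets_groups_onceP y :
  reflect {in y &, forall p q, p.1 = q.1 -> p = q} (meets_groups_once y).
Proof.
apply: (iffP forallP) => [y1 p q py qy e | inj1 u].
  by apply: (card_le1_eqP (y1 p.1)); rewrite inE ?py ?qy ?e /=.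
apply/card_le1_eqP => p q; rewrite !inE => /andP[py /eqP e1] /andP[qy /eqP e2].
by apply: inj1 => //; rewrite e1 e2.
Qed.

Lemma card_supp y : meets_groups_once y -> #|supp y| = #|y|.
Proof. by move/meets_groups_onceP => inj1; rewrite card_in_imset. Qed.

Lemma all_wordsP w y : reflect (#|y| = w /\ meets_groups_once y) (y \in all_words w m g).
Proof. by rewrite inE; apply: (iffP andP) => [[/eqP]|[->]]. Qed.

Lemma word_eqNone y u : (word y u == None) = (u \notin supp y).
Proof.
rewrite /word; case: pickP => [a ua | none] /=.
  by apply/esym/negbF/imsetP; exists (u, a).
apply/esym/negP => /imsetP [p py pe].
by have := none p.2; rewrite pe -surjective_pairing py.
Qed.

Lemma leq_hamming_supp y1 y2 :
  #|supp y1 :\: supp y2| + #|supp y2 :\: supp y1| <= hamming y1 y2.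
Proof.
set S1 := supp y1; set S2 := supp y2.
have disjD : (S1 :\: S2) :&: (S2 :\: S1) = set0.
  by apply/setP => u; rewrite !inE; case: (u \in S1); rewrite ?andbF.
rewrite -cardsUI disjD cards0 addn0 /hamming; apply/subset_leq_card/subsetP => u.
rewrite !inE => /orP[] /andP[];
  by rewrite -word_eqNone -[_ \in supp _]negbK -word_eqNone => /eqP->; case: (word _ u).
Qed.

End Words.

Section Relabel.
Variables (m n g : nat) (f : 'I_m -> 'I_n).
Hypothesis f_inj : injective f.

Definition relabel (p : 'I_m * 'I_g) : 'I_n * 'I_g := (f p.1, p.2).
Definition push (q : {set 'I_m * 'I_g}) : {set 'I_n * 'I_g} := relabel @: q.
Definition pull (y : {set 'I_n * 'I_g}) : {set 'I_m * 'I_g} := relabel @^-1: y.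

Lemma relabel_inj : injective relabel.
Proof. by move=> [i a] [j b] [/f_inj -> ->]. Qed.

Lemma pushK : cancel push pull.
Proof. by move=> q; apply/setP => p; rewrite inE mem_imset //; apply: relabel_inj. Qed.

Lemma pullK y : supp y \subset codom f -> push (pull y) = y.
Proof.
move=> sy; apply/setP => p; apply/imsetP/idP => [[q] | py].
  by rewrite inE => qy ->.
have /codomP [i ip] : p.1 \in codom f by apply: (subsetP sy); apply: imset_f.
by exists (i, p.2); rewrite ?inE /relabel /= -ip -surjective_pairing.
Qed.

Lemma card_push q : #|push q| = #|q|.
Proof. exact/card_imset/relabel_inj. Qed.

Lemma supp_push q : supp (push q) = f @: supp q.
Proof. by rewrite /supp /push -!imset_comp. Qed.

Lemma card_pull y : supp y \subset codom f -> #|pull y| = #|y|.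
Proof. by move=> sy; rewrite -{2}(pullK sy) card_push. Qed.

Lemma card_supp_pull y : supp y \subset codom f -> #|supp (pull y)| = #|supp y|.
Proof. by move=> sy; rewrite -{2}(pullK sy) supp_push (card_imset _ f_inj). Qed.

Lemma push_meets_groups_once q : meets_groups_once q -> meets_groups_once (push q).
Proof.
move/meets_groups_onceP => inj1; apply/meets_groups_onceP.
move=> _ _ /imsetP [p pq ->] /imsetP [p' p'q ->] /= /f_inj e.
by rewrite (inj1 p p').
Qed.

Lemma pull_meets_groups_once y : meets_groups_once y -> meets_groups_once (pull y).
Proof.
move/meets_groups_onceP => inj1; apply/meets_groups_onceP => p p'.
rewrite !inE => py p'y e; apply: relabel_inj; apply: inj1 => //=.
by rewrite e.
Qed.

Lemma push_all_words w q : q \in all_words w m g -> push q \in all_words w n g.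
Proof.
case/all_wordsP => cq mq; apply/all_wordsP.
by rewrite card_push push_meets_groups_once.
Qed.

Lemma pull_all_words w y :
  supp y \subset codom f -> y \in all_words w n g -> pull y \in all_words w m g.
Proof.
move=> sy /all_wordsP [cy my]; apply/all_wordsP.
by rewrite card_pull // cy pull_meets_groups_once.
Qed.

Lemma word_pull y i : word (pull y) i = word y (f i).
Proof. by apply: eq_pick => a; rewrite inE. Qed.

Lemma leq_hamming_pull y1 y2 : hamming (pull y1) (pull y2) <= hamming y1 y2.
Proof.
rewrite /hamming -(card_imset _ f_inj); apply/subset_leq_card/subsetP.
by move=> _ /imsetP [i + ->]; rewrite !inE !word_pull.
Qed.

End Relabel.

Section BlockLabel.
Variables (n k : nat) (d : 'I_n) (b : {set 'I_n}).
Hypothesis card_b : #|b| = k.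

(* [d] is only the default of [nth]; it is never returned since [k = #|b|]. *)
Definition block_label (i : 'I_k) : 'I_n := nth d (enum b) i.

Let size_enum : size (enum b) = k.
Proof. by rewrite -cardE card_b. Qed.

Lemma block_label_inj : injective block_label.
Proof.
move=> i j /eqP; rewrite /block_label nth_uniq ?size_enum ?enum_uniq //.
by move/eqP/val_inj.
Qed.

Lemma codom_block_label : codom block_label =i b.
Proof.
move=> u; apply/codomP/idP => [[i ->] | ub].
  by rewrite -mem_enum mem_nth // size_enum.
have ik : index u (enum b) < k by rewrite -size_enum index_mem mem_enum.
by exists (Ordinal ik); rewrite /block_label nth_index // mem_enum.
Qed.

End BlockLabel.

Lemma pblock_eqE (T : finType) (P : {set {set T}}) D C x :
  partition P D -> C \in P -> x \in D -> (pblock P x == C) = (x \in C).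
Proof.
move=> partP PC xD; apply/eqP/idP => [<- | xC].
  by rewrite mem_pblock (cover_partition partP).
by case/and3P: partP => _ triv _; apply: def_pblock.
Qed.

Section Steiner.
Variables (s k n : nat) (C : {set {set 'I_n}}).
Hypothesis steinerC : steiner_system s k C.

Lemma steiner_block_exists (U : {set 'I_n}) :
  #|U| = s -> exists2 b, b \in C & U \subset b.
Proof.
move=> cU; have : 0 < #|[set b in C | U \subset b]| by rewrite steinerC.2.
by case/card_gt0P => b; rewrite inE => /andP[]; exists b.
Qed.

Lemma steiner_block_uniq (U b1 b2 : {set 'I_n}) : #|U| = s ->
  b1 \in C -> b2 \in C -> U \subset b1 -> U \subset b2 -> b1 = b2.
Proof.
move=> cU Cb1 Cb2 sU1 sU2.
have : #|[set b in C | U \subset b]| <= 1 by rewrite steinerC.2.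
by move/card_le1_eqP; apply; rewrite inE ?Cb1 ?Cb2 ?sU1 ?sU2.
Qed.

Lemma steiner_meet_lt (b1 b2 : {set 'I_n}) :
  b1 \in C -> b2 \in C -> b1 != b2 -> #|b1 :&: b2| < s.
Proof.
move=> Cb1 Cb2; apply: contraNT; rewrite -leqNgt => leI.
have : 0 < #|[set U : {set 'I_n} | U \subset b1 :&: b2 & #|U| == s]|.
  by rewrite cards_draws bin_gt0.
case/card_gt0P => U; rewrite inE subsetI => /andP[/andP[sU1 sU2] /eqP cU].
exact/eqP/(steiner_block_uniq cU).
Qed.

Lemma card_steiner : #|C| * 'C(k, s) = 'C(n, s).
Proof.
transitivity (\sum_(b in C) \sum_(U : {set 'I_n} | (U \subset b) && (#|U| == s)) 1).
  rewrite -sum_nat_const; apply: eq_bigr => b Cb.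
  by rewrite sum1dep_card cards_draws steinerC.1.
rewrite (exchange_big_dep (fun U : {set 'I_n} => #|U| == s)) => [|b U _ /andP[] //].
rewrite -[n in 'C(n, s)]card_ord -card_draws -sum1dep_card.
apply: eq_bigr => U /eqP cU; rewrite sum1dep_card -(steinerC.2 U cU).
by apply: eq_card => b; rewrite !inE cU eqxx andbT.
Qed.

End Steiner.

Section Lift.
Variables (t w w' n g : nat) (d : 'I_n).
Hypothesis t_le_w : t <= w.
Variables (B : {set {set 'I_n}}) (P : {set {set {set 'I_n}}}).
Hypotheses (steinerB : steiner_system w w' B) (partP : partition P B)
  (steinerP : forall C, C \in P -> steiner_system t w' C).
Variable L : {set {set {set 'I_w' * 'I_g}}}.
Hypotheses (partL : partition L (all_words w w' g))
  (gmhpL : forall Q, Q \in L -> GMHP t w Q).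

Local Notation words := (all_words w n g).
Local Notation local_words := (all_words w w' g).
Local Notation label b := (@block_label n w' d b).

Definition block_of (y : {set 'I_n * 'I_g}) : {set 'I_n} :=
  odflt set0 [pick b in B | supp y \subset b].

Definition local_word (y : {set 'I_n * 'I_g}) : {set 'I_w' * 'I_g} :=
  pull (label (block_of y)) y.

Let label_inj b : b \in B -> injective (label b).
Proof. by move/steinerB.1; apply: block_label_inj. Qed.

Let subset_codom_label b (A : {set 'I_n}) :
  b \in B -> (A \subset codom (label b)) = (A \subset b).
Proof. by move=> /steinerB.1 cb; apply/eq_subset_r/codom_block_label. Qed.

Let card_supp_word y : y \in words -> #|supp y| = w.
Proof. by case/all_wordsP => cy my; rewrite card_supp. Qed.

Lemma block_ofP y : y \in words -> block_of y \in B /\ supp y \subset block_of y.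
Proof.
move=> yw; rewrite /block_of; case: pickP => [b /andP[] // | none].
have [b Bb sb] := steiner_block_exists steinerB (card_supp_word yw).
by have := none b; rewrite Bb sb.
Qed.

Lemma block_of_uniq y b : y \in words -> b \in B -> supp y \subset b -> block_of y = b.
Proof.
move=> yw Bb sb; have [Bby sby] := block_ofP yw.
exact: (steiner_block_uniq steinerB (card_supp_word yw) Bby Bb sby sb).
Qed.

Lemma local_word_words y : y \in words -> local_word y \in local_words.
Proof.
move=> yw; have [Bby sby] := block_ofP yw.
by apply: (pull_all_words (label_inj Bby)); rewrite ?subset_codom_label.
Qed.

Lemma local_wordK y : y \in words -> push (label (block_of y)) (local_word y) = y.
Proof. by move=> yw; have [Bby sby] := block_ofP yw; rewrite pullK ?subset_codom_label. Qed.

Lemma block_local_word_inj :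
  {in words &, injective (fun y => (block_of y, local_word y))}.
Proof.
move=> y1 y2 yw1 yw2 [eb el].
by rewrite -(local_wordK yw1) el eb local_wordK.
Qed.

Lemma push_label_words b q :
  b \in B -> q \in local_words -> push (label b) q \in words.
Proof. by move=> Bb; apply/push_all_words/label_inj. Qed.

Lemma block_of_push b q :
  b \in B -> q \in local_words -> block_of (push (label b) q) = b.
Proof.
move=> Bb qw; apply: block_of_uniq; rewrite ?push_label_words //.
rewrite -(subset_codom_label _ Bb) supp_push.
by apply/subsetP => _ /imsetP [i _ ->]; apply: codom_f.
Qed.

Lemma local_word_push b q :
  b \in B -> q \in local_words -> local_word (push (label b) q) = q.
Proof. by move=> Bb qw; rewrite /local_word block_of_push // pushK //; apply: label_inj. Qed.

Definition lift_class (C : {set {set 'I_n}}) (Q : {set {set 'I_w' * 'I_g}}) :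
    {set {set 'I_n * 'I_g}} :=
  [set y in words | (block_of y \in C) && (local_word y \in Q)].

Lemma card_lift_class (C : {set {set 'I_n}}) (Q : {set {set 'I_w' * 'I_g}}) :
  C \subset B -> Q \subset local_words -> #|lift_class C Q| = #|C| * #|Q|.
Proof.
move=> sCB sQw; rewrite -cardsX -(card_in_imset (sub_in2 _ block_local_word_inj));
  last by move=> y /setIdP[].
apply: eq_card => -[b q]; rewrite [in RHS]inE /=.
apply/imsetP/andP => [[y /setIdP[_ /andP[Cb Qq]] [-> ->]] // | [Cb Qq]].
have Bb := subsetP sCB b Cb; have qw := subsetP sQw q Qq.
exists (push (label b) q); last by rewrite block_of_push ?local_word_push.
by rewrite inE push_label_words ?block_of_push ?local_word_push ?Cb ?Qq.
Qed.

Section LiftClass.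
Variables (C : {set {set 'I_n}}) (Q : {set {set 'I_w' * 'I_g}}).
Hypotheses (PC : C \in P) (LQ : Q \in L).

Local Notation K := (lift_class C Q).

Let steinerC := steinerP PC.
Let gmhpQ := gmhpL LQ.

Let sub_CB : C \subset B.
Proof. by rewrite -(cover_partition partP); apply: bigcup_sup. Qed.

Let sub_Qw : Q \subset local_words.
Proof. by rewrite -(cover_partition partL); apply: bigcup_sup. Qed.

Let lift_classP y :
  y \in K -> [/\ y \in words, block_of y \in C & local_word y \in Q].
Proof. by rewrite inE => /andP[-> /andP[-> ->]]. Qed.

Lemma lift_class_HP : HP w t K.
Proof.
split=> [y /lift_classP [/all_wordsP] // | T cT cST].
apply/card_le1_eqP => y1 y2.
move=> /setIdP[/lift_classP [yw1 C1 Q1] sT1] /setIdP[/lift_classP [yw2 C2 Q2] sT2].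
have [Bb1 sb1] := block_ofP yw1; have [Bb2 sb2] := block_ofP yw2.
have sTb1 : supp T \subset block_of y1 by apply: subset_trans sb1; apply: imsetS.
have sTb2 : supp T \subset block_of y2 by apply: subset_trans sb2; apply: imsetS.
have eb : block_of y1 = block_of y2 by apply: (steiner_block_uniq steinerC cST).
apply: block_local_word_inj => //; congr pair => //.
rewrite /local_word in Q1 Q2 *; rewrite -eb in Q2 *.
set b := block_of y1 in Bb1 sTb1 Q1 Q2 *.
have sTc : supp T \subset codom (label b) by rewrite subset_codom_label.
have cpT : #|pull (label b) T| = t by rewrite (card_pull (label_inj Bb1)).
have cspT : #|supp (pull (label b) T)| = t by rewrite (card_supp_pull (label_inj Bb1)).
by apply: (card_le1_eqP (gmhpQ.1.2 _ cpT cspT)); rewrite inE ?Q1 ?Q2 preimsetS.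
Qed.

Lemma lift_class_distance y1 y2 :
  y1 \in K -> y2 \in K -> y1 != y2 -> 2 * (w - t + 1) <= hamming y1 y2.
Proof.
move=> /lift_classP [yw1 C1 Q1] /lift_classP [yw2 C2 Q2] ne12.
have [eb | neb] := eqVneq (block_of y1) (block_of y2).
  have nel : local_word y1 != local_word y2.
    by apply: contraNneq ne12 => el; apply/eqP/block_local_word_inj => //; rewrite eb el.
  apply: leq_trans (gmhpQ.2.1 _ _ Q1 Q2 nel) _.
  have [Bb1 _] := block_ofP yw1.
  by rewrite /local_word -eb; apply/leq_hamming_pull/label_inj.
have [[_ sb1] [_ sb2]] := (block_ofP yw1, block_ofP yw2).
have meet_lt := steiner_meet_lt steinerC C1 C2 neb.
have meet_supp_lt : #|supp y1 :&: supp y2| < t.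
  exact/(leq_ltn_trans _ meet_lt)/subset_leq_card/setISS.
apply: leq_trans (leq_hamming_supp y1 y2).
rewrite !cardsD [supp y2 :&: _]setIC !card_supp_word // addnn -mul2n leq_mul2l /=.
by rewrite addn1 -subSn // -[w - _]subSS; apply: leq_sub2l.
Qed.

Lemma lift_class_GMHP : GMHP t w K.
Proof.
split; [exact: lift_class_HP | split; first exact: lift_class_distance].
by rewrite card_lift_class // -mulnA gmhpQ.2.2 mulnCA card_steiner.
Qed.

End LiftClass.

Definition lift_partition : {set {set {set 'I_n * 'I_g}}} :=
  preim_partition (fun y => (pblock P (block_of y), pblock L (local_word y))) words.

Lemma lift_partition_class K : K \in lift_partition ->
  exists C Q, [/\ C \in P, Q \in L & K = lift_class C Q].
Proof.
case/imsetP => x xw ->; have [Bbx _] := block_ofP xw.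
have PC : pblock P (block_of x) \in P by rewrite pblock_mem ?(cover_partition partP).
have LQ : pblock L (local_word x) \in L.
  by rewrite pblock_mem ?(cover_partition partL) ?local_word_words.
exists (pblock P (block_of x)), (pblock L (local_word x)); split => //.
apply/setP => y; rewrite inE [in RHS]inE; apply: andb_id2l => yw.
have [Bby _] := block_ofP yw.
rewrite xpair_eqE eq_sym (pblock_eqE partP) // eq_sym (pblock_eqE partL) //.
exact: local_word_words.
Qed.

Lemma lift_LGMHP : LGMHP_exists t w n g.
Proof.
exists lift_partition; split; first exact: preim_partitionP.
by move=> K /lift_partition_class [C [Q [PC LQ ->]]]; apply: lift_class_GMHP.
Qed.

End Lift.

Theorem theorem3p9 (t w w' n g : nat) :
  0 < t -> 0 < w -> 0 < w' -> 0 < n -> 0 < g ->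
  t <= w -> w <= w' ->
  t_resolvable_steiner_exists t w w' n ->
  LGMHP_exists t w w' g ->
  LGMHP_exists t w n g.
Proof.
move=> _ _ _ n_gt0 _ t_le_w _ [B [steinerB [P [partP steinerP]]]] [L [partL gmhpL]].
exact: (lift_LGMHP (Ordinal n_gt0) t_le_w steinerB partP steinerP partL gmhpL).
Qed.
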